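(* Let $k\ge 2$, $X_1,\dots,X_k\in\mathcal{M}_d$ and $S\subseteq\{1,\dots,k\}$. For $i\in\{1,\dots,k\}$ put $X_i'=X_i^T$ if $i\in S$ and $X_i'=X_i$ if $i\notin S$, and put $Y_i=X_i$ if $i\in S$ and $Y_i=X_i^T$ if $i\notin S$. Then $$\operatorname{tr}_{\{1,\dots,k\}\setminus\{k\}}\big[(k\,k\!-\!1\cdots1)^{T_S}(X_1\otimes\cdots\otimes X_k)\big]=\begin{cases}X_1'X_2'\cdots X_{k-1}'X_k & k\notin S,\\ Y_{k-1}Y_{k-2}\cdots Y_1X_k & k\in S.\end{cases}$$
   Context: $\mathcal{M}_d$ denotes complex $d\times d$ matrices. A permutation $\sigma\in S_k$ acts on $(\mathbb{C}^d)^{\otimes k}$ by $\sigma|v_1\rangle\otimes\cdots\otimes|v_k\rangle=|v_{\sigma^{-1}(1)}\rangle\otimes\cdots\otimes|v_{\sigma^{-1}(k)}\rangle$, extended linearly; $(k\,k\!-\!1\cdots1)$ is the cycle $k\to k-1\to\cdots\to1\to k$. $T_S$ is the partial transpose (with respect to a fixed orthonormal basis) on all tensor factors in $S$, and $X^T$ is the transpose in that basis. $\operatorname{tr}_{\{1,\dots,k\}\setminus\{k\}}$ is the partial trace over all tensor factors except the $k$-th. *)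

From HB Require Import structures.
From mathcomp Require Import all_boot all_order all_algebra all_fingroup.
Set Implicit Arguments. Unset Strict Implicit. Unset Printing Implicit Defensive.
Import GRing.Theory.
Local Open Scope ring_scope.

(* Operators on (R^d)^{(x)k}, given by their matrix entries in the product
   basis |e_{i 0}> (x) ... (x) |e_{i (k-1)}>, indexed by multi-indices
   i : 'I_k -> 'I_d (tensor factors are numbered 0..k-1 instead of 1..k). *)
Definition midx (k d : nat) := {ffun 'I_k -> 'I_d}.
Definition tensor_op (R : Type) (k d : nat) := midx k d -> midx k d -> R.

Definition tensor_mx (R : comNzRingType) (k d : nat) (X : 'I_k -> 'M[R]_d)
  : tensor_op R k d :=
  fun i j => \prod_(m < k) X m (i m) (j m).

(* the operator of a permutation s:
   s |v_1> (x) ... (x) |v_k> = |v_{s^-1 1}> (x) ... (x) |v_{s^-1 k}>,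
   so s |e_j> = |e_{j o s^-1}>, i.e. entry (i,j) is [i = j o s^-1]. *)
Definition perm_op (R : comNzRingType) (k d : nat) (s : {perm 'I_k})
  : tensor_op R k d :=
  fun i j => ([forall m, i m == j ((s^-1)%g m)])%:R.

(* the cycle (k k-1 ... 1): k -> k-1 -> ... -> 1 -> k; with 0-based indices
   m -> m-1 (mod k). *)
Definition cycle_down (k : nat) : {perm 'I_k} := perm (@ord_pred_inj k).

Definition ptrans (R : Type) (k d : nat) (S : {set 'I_k}) (A : tensor_op R k d)
  : tensor_op R k d :=
  fun i j => A [ffun m => if m \in S then j m else i m]
               [ffun m => if m \in S then i m else j m].

Definition ptrace_keep (R : comNzRingType) (k d : nat) (l : 'I_k)
  (A : tensor_op R k d) : 'M[R]_d :=
  \matrix_(a, b) \sum_(i : midx k d) \sum_(j : midx k d)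
     ([forall m, if m == l then (i m == a) && (j m == b) else i m == j m])%:R
       * A i j.

Lemma last_subproof (k : nat) : (1 < k)%N -> (k.-1 < k)%N.
Proof. by case: k. Qed.

(* the last tensor factor (factor k, 0-based index k-1) *)
Definition klast (k : nat) (hk : (1 < k)%N) : 'I_k := Ordinal (last_subproof hk).

Definition op_mul (R : comNzRingType) (k d : nat) (A B : tensor_op R k d)
  : tensor_op R k d :=
  fun i j => \sum_(l : midx k d) A i l * B l j.

(* Undoing the partial transpose is an involutive change of summation
   variables, (i, j) -> (swap_on S i j, swap_on S j i); afterwards the cycle
   operator forces its row index to be its column index v read one step
   further along the cycle.  The trace entry (a, b) thus becomes a sum over v
   of X'_1(v_1, v_2) ... X'_(k-1)(v_(k-1), v_k) times an entry of X_k, i.e. a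
   sum over paths, which is an entry of a matrix product.  The path starts at
   a when k is not in S and ends at a when k is in S; in the second case the
   product appears transposed, which reverses it and turns X' into Y. *)

From HB Require Import structures.
From mathcomp Require Import all_boot all_order all_algebra all_fingroup.
Set Implicit Arguments. Unset Strict Implicit. Unset Printing Implicit Defensive.
Import GRing.Theory.
Local Open Scope ring_scope.

Lemma big_ord_neq_max (T : Type) (idx : T) (op : Monoid.law idx) n
    (F : 'I_n.+1 -> T) :
  \big[op/idx]_(i < n.+1 | i != ord_max) F i =
  \big[op/idx]_(i < n) F (widen_ord (leqnSn n) i).
Proof.
rewrite big_mkcond big_ord_recr /= eqxx Monoid.mulm1; apply: eq_bigr => i _.
by rewrite -(inj_eq val_inj) /= ltn_eqF.
Qed.

Section MatrixProducts.
Variables (R : comNzRingType) (d : nat).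

Lemma sum_natr_eq_mul (T : finType) (x0 : T) (F : T -> R) :
  \sum_x (x == x0)%:R * F x = F x0.
Proof.
under eq_bigr do rewrite mulr_natl mulrb.
by rewrite -big_mkcond big_pred1_eq.
Qed.

Definition ffun_cons n (x : 'I_d) (g : {ffun 'I_n -> 'I_d})
  : {ffun 'I_n.+1 -> 'I_d} :=
  [ffun i => if unlift ord0 i is Some j then g j else x].

Lemma ffun_cons0 n x g : @ffun_cons n x g ord0 = x.
Proof. by rewrite ffunE unlift_none. Qed.

Lemma ffun_cons_lift n x g j : @ffun_cons n x g (lift ord0 j) = g j.
Proof. by rewrite ffunE liftK. Qed.

Lemma sum_ffunS n (F : {ffun 'I_n.+1 -> 'I_d} -> R) :
  \sum_c F c = \sum_x \sum_(g : {ffun 'I_n -> 'I_d}) F (ffun_cons x g).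
Proof.
rewrite pair_big /= (reindex (fun p => ffun_cons p.1 p.2)) //=.
exists (fun c => (c ord0, [ffun j => c (lift ord0 j)])) => [[x g] _ | c _] /=.
  rewrite ffun_cons0; congr pair.
  by apply/ffunP => j; rewrite ffunE ffun_cons_lift.
by apply/ffunP => i; rewrite ffunE; case: unliftP => [j|] ->; rewrite ?ffunE.
Qed.

Lemma prodmx_path_sum L (M : 'I_L -> 'M[R]_d) a e :
  (\prod_(m < L) M m) a e =
  \sum_(c : {ffun 'I_L.+1 -> 'I_d}) (c ord0 == a)%:R * (c ord_max == e)%:R *
     \prod_(m < L) M m (c (widen_ord (leqnSn L) m)) (c (lift ord0 m)).
Proof.
elim: L M a => [|L IH] M a.
  rewrite big_ord0 mxE sum_ffunS.
  under eq_bigr => x _.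
    under eq_bigr => g _ do rewrite (ord1 ord_max) ffun_cons0 big_ord0 mulr1.
    rewrite sumr_const card_ffun !card_ord expn0 mulr1n.
  over.
  by rewrite sum_natr_eq_mul.
rewrite big_ord_recl mxE sum_ffunS.
under [RHS]eq_bigr => x _.
  under eq_bigr => g _ do rewrite ffun_cons0 -mulrA.
  rewrite -mulr_sumr.
over.
rewrite sum_natr_eq_mul.
under eq_bigr => j _ do rewrite IH mulr_sumr.
rewrite exchange_big; apply: eq_bigr => g _.
under eq_bigr => j _ do rewrite -mulrA mulrCA eq_sym.
rewrite sum_natr_eq_mul big_ord_recl.
have -> : widen_ord (leqnSn L.+1) ord0 = ord0 by apply: val_inj.
have -> : ord_max = lift ord0 (ord_max : 'I_L.+1) by apply: val_inj.
have wl m : widen_ord (leqnSn L.+1) (lift ord0 m) =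
            lift ord0 (widen_ord (leqnSn L) m) by apply: val_inj.
under [in RHS]eq_bigr => m _ do rewrite wl !ffun_cons_lift.
by rewrite ffun_cons0 !ffun_cons_lift mulrCA.
Qed.

Lemma mulmx_path_sum L (M : 'I_L -> 'M[R]_d) (N : 'M[R]_d) a b :
  (\prod_(m < L) M m *m N) a b =
  \sum_(c : {ffun 'I_L.+1 -> 'I_d}) (c ord0 == a)%:R *
     (\prod_(m < L) M m (c (widen_ord (leqnSn L) m)) (c (lift ord0 m)) *
      N (c ord_max) b).
Proof.
rewrite mxE; under eq_bigr => e _ do rewrite prodmx_path_sum mulr_suml.
rewrite exchange_big; apply: eq_bigr => c _.
under eq_bigr => e _ do rewrite -!mulrA mulrCA (eq_sym (c ord_max)).
by rewrite sum_natr_eq_mul.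
Qed.

Lemma trmx_mulmx_path_sum L (M : 'I_L -> 'M[R]_d) (N : 'M[R]_d) a b :
  ((\prod_(m < L) M m)^T *m N) a b =
  \sum_(c : {ffun 'I_L.+1 -> 'I_d}) (c ord_max == a)%:R *
     (\prod_(m < L) M m (c (widen_ord (leqnSn L) m)) (c (lift ord0 m)) *
      N (c ord0) b).
Proof.
rewrite mxE; under eq_bigr => e _ do rewrite mxE prodmx_path_sum mulr_suml.
rewrite exchange_big; apply: eq_bigr => c _.
under eq_bigr => e _ do rewrite -!mulrA (eq_sym (c ord0)).
by rewrite sum_natr_eq_mul.
Qed.

Lemma trmx_prod (I : Type) (r : seq I) (P : pred I) (F : I -> 'M[R]_d) :
  (\prod_(i <- r | P i) F i)^T = \prod_(i <- rev r | P i) (F i)^T.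
Proof.
rewrite rev_big_rev; apply: big_morph => [A B|]; [exact: trmx_mul | exact: trmx1].
Qed.

Lemma big_mulmx_prod (I : Type) (r : seq I) (P : pred I) (F : I -> 'M[R]_d) :
  \big[mulmx/1%:M]_(i <- r | P i) F i = \prod_(i <- r | P i) F i.
Proof. by []. Qed.

End MatrixProducts.

Section TensorOperators.
Variables (R : comNzRingType) (d n : nat).
Implicit Types (S : {set 'I_n}) (A : tensor_op R n d) (i j u v : midx n d).

Lemma ptrace_keep_condE (l : 'I_n) a b i j :
  [forall m, if m == l then (i m == a) && (j m == b) else i m == j m] =
  (i l == a) && (j == [ffun m => if m == l then b else i m]).
Proof.
apply/forallP/andP => [H | [/eqP <- /eqP ->] m]; last first.
  by rewrite ffunE; case: eqP => [->|]; rewrite !eqxx.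
split; first by have := H l; rewrite eqxx => /andP[].
apply/eqP/ffunP => m; rewrite ffunE.
by have := H m; case: eqP => [-> /andP[_ /eqP] | _ /eqP].
Qed.

Lemma ptrace_keepE (l : 'I_n) A a b :
  ptrace_keep l A a b =
  \sum_(i : midx n d) (i l == a)%:R * A i [ffun m => if m == l then b else i m].
Proof.
rewrite mxE; apply: eq_bigr => i _.
under eq_bigr do rewrite ptrace_keep_condE -mulnb natrM -mulrA.
by rewrite -mulr_sumr sum_natr_eq_mul.
Qed.

Definition swap_on S u v : midx n d := [ffun m => if m \in S then v m else u m].

Lemma ptransE S A i j : ptrans S A i j = A (swap_on S i j) (swap_on S j i).
Proof. by []. Qed.

Lemma swap_onK S u v : swap_on S (swap_on S u v) (swap_on S v u) = u.
Proof. by apply/ffunP => m; rewrite !ffunE; case: (m \in S). Qed.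

Lemma sum_ptrans S A (F : midx n d -> midx n d -> R) :
  \sum_(i : midx n d) \sum_(j : midx n d) ptrans S A i j * F i j =
  \sum_(u : midx n d) \sum_(v : midx n d)
     A u v * F (swap_on S u v) (swap_on S v u).
Proof.
pose sw p := (swap_on S p.1 p.2, swap_on S p.2 p.1).
have swK : involutive sw by case=> u v; rewrite /sw /= !swap_onK.
rewrite !pair_big /= (reindex_inj (inv_inj swK)) /=.
by apply: eq_bigr => -[u v] _; rewrite ptransE !swap_onK.
Qed.

Lemma perm_opE (s : {perm 'I_n}) u v :
  perm_op R s u v = (u == [ffun m => v ((s^-1)%g m)])%:R.
Proof.
congr (_%:R); congr (nat_of_bool _).
apply/forallP/eqP => [H | -> m]; last by rewrite ffunE.
by apply/ffunP => m; rewrite ffunE; apply/eqP.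
Qed.

Lemma sum_perm_op (s : {perm 'I_n}) (F : midx n d -> midx n d -> R) :
  \sum_(u : midx n d) \sum_(v : midx n d) perm_op R s u v * F u v =
  \sum_(v : midx n d) F [ffun m => v ((s^-1)%g m)] v.
Proof.
rewrite exchange_big; apply: eq_bigr => v _.
by under eq_bigr do rewrite perm_opE; rewrite sum_natr_eq_mul.
Qed.

End TensorOperators.

Lemma cycle_downVE n (m : 'I_n) : ((cycle_down n)^-1)%g m = ordS m.
Proof. by apply: (canLR (permK _)); rewrite permE ordSK. Qed.

Lemma ordS_max n : ordS (ord_max : 'I_n.+1) = ord0.
Proof. by apply: val_inj; rewrite /= modnn. Qed.

Lemma ordS_widen n (m : 'I_n) : ordS (widen_ord (leqnSn n) m) = lift ord0 m.
Proof. by apply: val_inj; rewrite /= modn_small // ltnS ltn_ord. Qed.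

Section CyclePartialTrace.
Variables (R : comNzRingType) (d L : nat).
Variables (X : 'I_L.+1 -> 'M[R]_d) (S : {set 'I_L.+1}).

Local Notation w := (widen_ord (leqnSn L)).
Local Notation X' i := (if i \in S then (X i)^T else X i).

Lemma ptrace_keep_cycle_entry a b :
  ptrace_keep ord_max
    (op_mul (ptrans S (perm_op R (cycle_down L.+1))) (tensor_mx X)) a b =
  \sum_(v : midx L.+1 d)
     ((if ord_max \in S then v ord_max else v ord0) == a)%:R *
     (\prod_(m < L) X' (w m) (v (w m)) (v (lift ord0 m)) *
      X ord_max (if ord_max \in S then v ord0 else v ord_max) b).
Proof.
rewrite ptrace_keepE /op_mul.
under eq_bigr => i _ do rewrite mulr_sumr.
under eq_bigr => i _ do under eq_bigr => j _ do rewrite mulrCA.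
rewrite sum_ptrans sum_perm_op; apply: eq_bigr => v _.
rewrite /tensor_mx big_ord_recr /= !ffunE eqxx cycle_downVE ordS_max.
congr (_ * (_ * _)); apply: eq_bigr => m _.
have wm_max : (w m == ord_max) = false by rewrite -(inj_eq val_inj) /= ltn_eqF.
rewrite !ffunE wm_max cycle_downVE ordS_widen.
by case: (w m \in S); rewrite ?mxE.
Qed.

End CyclePartialTrace.

Theorem proposition4 (R : comNzRingType) (d k : nat) (hk : (1 < k)%N)
  (X : 'I_k -> 'M[R]_d) (S : {set 'I_k}) :
  let X' := fun i => if i \in S then (X i)^T else X i in
  let Y := fun i => if i \in S then X i else (X i)^T in
  ptrace_keep (klast hk)
    (op_mul (ptrans S (@perm_op R k d (cycle_down k))) (tensor_mx X)) =
  if klast hk \notin S then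
    (\big[mulmx/1%:M]_(i < k | i != klast hk) X' i) *m X (klast hk)
  else
    (\big[mulmx/1%:M]_(i <- rev (enum 'I_k) | i != klast hk) Y i)
      *m X (klast hk).
Proof.
case: k hk X S => [//|L] hk X S X' Y.
have -> : klast hk = ord_max by apply: val_inj.
have YE i : Y i = (X' i)^T by rewrite /Y /X'; case: (i \in S); rewrite ?trmxK.
case: ifPn => [/negbTE | /negPn] max_S; apply/matrixP => a b.
  rewrite ptrace_keep_cycle_entry max_S big_mulmx_prod big_ord_neq_max.
  by rewrite mulmx_path_sum.
rewrite ptrace_keep_cycle_entry max_S big_mulmx_prod.
have -> : enum 'I_L.+1 = index_enum 'I_L.+1 by rewrite [index_enum _]unlock enumT.
rewrite (eq_bigr _ (fun i _ => YE i)) -trmx_prod big_ord_neq_max.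
by rewrite trmx_mulmx_path_sum.
Qed.
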